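(* For every $n>3$, $\rho_T(P_n)=2$, where $P_n$ is the path on $n$ vertices.
   Context: Graphs are finite and simple. For $u,v\in(\mathbb{R}\cup\{\infty\})^k$ the min-plus tropical dot product is $u\odot v=\min_i(u_i+v_i)$. A min-plus $k$-tropical dot product representation of $G=(V,E)$ is a map $f:V\to(\mathbb{R}\cup\{\infty\})^k$ with a threshold $t>0$ such that for all distinct $x,y\in V$: $xy\in E$ iff $f(x)\odot f(y)\ge t$. $\rho_T(G)$ is the least $k\ge 1$ for which such a representation exists. *)

From Stdlib Require Import Reals Lra Lia.
Open Scope R_scope.

(* Elements of R ∪ {∞}: [Some r] is the real r, [None] is +∞. *)
Definition Rinf := option R.

Definition iadd (a b : Rinf) : Rinf :=
  match a, b with Some x, Some y => Some (x + y) | _, _ => None end.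

Definition imin (a b : Rinf) : Rinf :=
  match a, b with
  | None, _ => b
  | _, None => a
  | Some x, Some y => Some (Rmin x y)
  end.

(* A vector in (R ∪ {∞})^k is a function nat -> Rinf; only indices < k are used. *)
Fixpoint tdot (k : nat) (u v : nat -> Rinf) : Rinf :=
  match k with
  | O => None
  | S k' => imin (tdot k' u v) (iadd (u k') (v k'))
  end.

Definition ige (a : Rinf) (t : R) : Prop :=
  match a with None => True | Some x => t <= x end.

Definition trop_rep (n : nat) (adj : nat -> nat -> Prop) (k : nat) : Prop :=
  exists (f : nat -> nat -> Rinf) (t : R), 0 < t /\
    forall x y : nat, (x < n)%nat -> (y < n)%nat -> x <> y ->
      (adj x y <-> ige (tdot k (f x) (f y)) t).

Definition rhoT_eq (n : nat) (adj : nat -> nat -> Prop) (k : nat) : Prop :=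
  (1 <= k)%nat /\ trop_rep n adj k /\
  forall j : nat, (1 <= j)%nat -> trop_rep n adj j -> (k <= j)%nat.

Definition path_adj (x y : nat) : Prop := y = S x \/ x = S y.

(* A one-dimensional representation assigns each vertex a single value, so
   adjacency means "sum of values >= t".  Then edges ab, cd and non-edges ac,
   bd give a + b + c + d >= 2t > a + c + b + d, which rules out the induced
   path 0-1-2-3.
   For two dimensions, flip the sign of the odd vertices, s(x) = (-1)^x x, and
   send x to (1 + s x, 1 - s x).  The dot product of x and y is then
   2 - |s x + s y|, and for distinct x, y we have |s x + s y| <= 1 exactly when
   x and y are consecutive. *)

From Stdlib Require Import Reals ZArith Lra Lia.
Open Scope R_scope.

Lemma tdot1 (u v : nat -> Rinf) : tdot 1 u v = iadd (u O) (v O).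
Proof. reflexivity. Qed.

Lemma not_ige_iadd (a b : Rinf) (t : R) :
  ~ ige (iadd a b) t -> exists x y, a = Some x /\ b = Some y /\ x + y < t.
Proof.
  destruct a as [x|], b as [y|]; simpl; intros H; try (exfalso; exact (H I)).
  exists x, y; repeat split; lra.
Qed.

Lemma ige_iadd_Some (x y t : R) : ige (iadd (Some x) (Some y)) t -> t <= x + y.
Proof. easy. Qed.

Lemma no_trop_rep1_of_alternating_cycle (n : nat) (adj : nat -> nat -> Prop)
    (a b c d : nat) :
  (a < n)%nat -> (b < n)%nat -> (c < n)%nat -> (d < n)%nat ->
  a <> b -> c <> d -> a <> c -> b <> d ->
  adj a b -> adj c d -> ~ adj a c -> ~ adj b d -> ~ trop_rep n adj 1.
Proof.
  intros Ha Hb Hc Hd Hab Hcd Hac Hbd Eab Ecd Nac Nbd [f [t [_ Hf]]].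
  assert (Hrep : forall x y, (x < n)%nat -> (y < n)%nat -> x <> y ->
            adj x y <-> ige (iadd (f x O) (f y O)) t).
  { intros x y Hx Hy Hxy; rewrite <- tdot1; exact (Hf x y Hx Hy Hxy). }
  destruct (not_ige_iadd _ _ _ (fun H => Nac (proj2 (Hrep a c Ha Hc Hac) H)))
    as [xa [xc [Fa [Fc Sac]]]].
  destruct (not_ige_iadd _ _ _ (fun H => Nbd (proj2 (Hrep b d Hb Hd Hbd) H)))
    as [xb [xd [Fb [Fd Sbd]]]].
  assert (Sab := proj1 (Hrep a b Ha Hb Hab) Eab).
  assert (Scd := proj1 (Hrep c d Hc Hd Hcd) Ecd).
  rewrite Fa, Fb in Sab; rewrite Fc, Fd in Scd.
  apply ige_iadd_Some in Sab; apply ige_iadd_Some in Scd.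
  lra.
Qed.

Definition alt_sign (x : nat) : Z :=
  if Nat.even x then Z.of_nat x else (- Z.of_nat x)%Z.

Lemma path_adj_alt_sign (x y : nat) :
  x <> y -> path_adj x y <-> (-1 <= alt_sign x + alt_sign y <= 1)%Z.
Proof.
  assert (parity : forall z, (Nat.even z = true /\ exists k, z = 2 * k)%nat \/
                             (Nat.even z = false /\ exists k, z = 2 * k + 1)%nat).
  { intros z; destruct (Nat.even z) eqn:E; [left | right]; split; auto.
    - apply Nat.even_spec in E; destruct E as [k ->]; exists k; lia.
    - rewrite <- Nat.negb_odd in E; apply Bool.negb_false_iff, Nat.odd_spec in E.
      destruct E as [k ->]; exists k; lia. }
  unfold path_adj, alt_sign; intros Hxy.
  destruct (parity x) as [[-> [k ->]] | [-> [k ->]]],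
           (parity y) as [[-> [l ->]] | [-> [l ->]]]; lia.
Qed.

Definition path_vec (x : nat) (i : nat) : Rinf :=
  match i with
  | O => Some (1 + IZR (alt_sign x))
  | _ => Some (1 - IZR (alt_sign x))
  end.

Lemma tdot_path_vec (x y : nat) :
  tdot 2 (path_vec x) (path_vec y)
  = Some (Rmin (2 + IZR (alt_sign x + alt_sign y)) (2 - IZR (alt_sign x + alt_sign y))).
Proof. simpl; rewrite plus_IZR; f_equal; f_equal; ring. Qed.

Lemma one_le_Rmin_iff (s : Z) :
  1 <= Rmin (2 + IZR s) (2 - IZR s) <-> (-1 <= s <= 1)%Z.
Proof.
  unfold Rmin; destruct (Rle_dec _ _); split.
  1, 3: intros H; split; apply le_IZR; lra.
  all: intros [H1 H2]; apply IZR_le in H1, H2; lra.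
Qed.

Lemma path_trop_rep2 (n : nat) : trop_rep n path_adj 2.
Proof.
  exists path_vec, 1; split; [lra|].
  intros x y _ _ Hxy.
  rewrite tdot_path_vec, path_adj_alt_sign by exact Hxy; simpl.
  symmetry; apply one_le_Rmin_iff.
Qed.

Theorem mainTheorem17 : forall n : nat, (3 < n)%nat -> rhoT_eq n path_adj 2.
Proof.
  intros n Hn; split; [lia|]; split; [apply path_trop_rep2|].
  intros [|[|j]] Hj Hrep; try lia.
  exfalso; refine (no_trop_rep1_of_alternating_cycle n path_adj 0 1 2 3
                     _ _ _ _ _ _ _ _ _ _ _ _ Hrep);
    unfold path_adj; lia.
Qed.
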